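(* Let $f(x)=\frac1n\sum_{i=1}^n f_i(x)$ on $\mathbb{R}^d$ with each $f_i$ convex and $L$-smooth, and let $x_0$ satisfy $\|x_0-x^\star\|\le R_0$ for some minimizer $x^\star$ of $f$. Run the following algorithm (Acc-SVRG-G) with $p_k\equiv\frac1n$ and $\tau_k\equiv1-\frac{1}{\sqrt{n+1}}$: set $z_0=\tilde x_0=x_0$, $\alpha_k=\frac{L\tau_k}{1-\tau_k}$, and for $k=0,1,\dots$: $y_k=\tau_kz_k+(1-\tau_k)(\tilde x_k-\frac1L\nabla f(\tilde x_k))$; $z_{k+1}=\arg\min_x\{\langle\mathcal G_k,x\rangle+\frac{\alpha_k}2\|x-z_k\|^2\}$ with $\mathcal G_k=\nabla f_{i_k}(y_k)-\nabla f_{i_k}(\tilde x_k)+\nabla f(\tilde x_k)$ and $i_k$ uniform on $\{1,\dots,n\}$; $\tilde x_{k+1}=y_k$ with probability $p_k$, else $\tilde x_{k+1}=\tilde x_k$. Let $N$ be the first iteration at which $\tilde x_{N+1}=y_N$ is chosen, and terminate at iteration $N$. Then $$\mathbb E\|\nabla f(\tilde x_{N+1})\|^2\le\frac{8L^2R_0^2}{5(\sqrt{n+1}+1)}\quad\text{and}\quad\mathbb E[f(\tilde x_{N+1})]-f(x^\star)\le\frac{LR_0^2}{\sqrt{n+1}+1}.$$ In particular, if $\epsilon_g^2\ge\frac{8L^2R_0^2}{5(\sqrt{n+1}+1)}$ and $\epsilon_f\ge\frac{LR_0^2}{\sqrt{n+1}+1}$, the algorithm achieves these accuracies with an $O(n)$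 expected oracle complexity.
   Context: $L$-smooth means $L$-Lipschitz gradient. Oracle complexity is the expected number of component gradient evaluations $\nabla f_i$; a full gradient costs $n$ evaluations. *)

From HB Require Import structures.
From mathcomp Require Import all_boot all_order all_algebra.
From mathcomp Require Import all_classical all_reals all_analysis.
Set Implicit Arguments. Unset Strict Implicit. Unset Printing Implicit Defensive.
Import Order.TTheory GRing.Theory Num.Theory.
Import numFieldNormedType.Exports.
Local Open Scope ring_scope.

Section AccSVRG.
Context {R : realType} {d n : nat}.

Definition dotv (u v : 'rV[R]_d) : R := \sum_(j < d) u ord0 j * v ord0 j.
Definition enorm (u : 'rV[R]_d) : R := Num.sqrt (dotv u u).

Definition favg (F : 'I_n -> 'rV[R]_d -> R) (x : 'rV[R]_d) : R :=
  n%:R^-1 * \sum_(i < n) F i x.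
Definition fullgrad (G : 'I_n -> 'rV[R]_d -> 'rV[R]_d) (x : 'rV[R]_d) : 'rV[R]_d :=
  n%:R^-1 *: \sum_(i < n) G i x.

Definition tau_n : R := 1 - (Num.sqrt (n.+1)%:R)^-1.
Definition alpha_n (L : R) : R := L * tau_n / (1 - tau_n).
Definition p_n : R := n%:R^-1.

(* One iteration of Acc-SVRG-G on the state (z_k, xtilde_k), given the
   sampled index i_k and the coin b_k (true = "xtilde_{k+1} := y_k",
   which happens with probability p_k).
   z_{k+1} = argmin_x <G_k,x> + alpha/2 ||x - z_k||^2 = z_k - G_k / alpha. *)
Definition accsvrg_step (L : R) (G : 'I_n -> 'rV[R]_d -> 'rV[R]_d)
    (st : 'rV[R]_d * 'rV[R]_d) (ib : 'I_n * bool) : 'rV[R]_d * 'rV[R]_d :=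
  let z := st.1 in let xt := st.2 in
  let y := tau_n *: z + (1 - tau_n) *: (xt - L^-1 *: fullgrad G xt) in
  let Gk := G ib.1 y - G ib.1 xt + fullgrad G xt in
  (z - (alpha_n L)^-1 *: Gk, if ib.2 then y else xt).

(* On the event {N = m}: coins b_0 = ... = b_{m-1} = false, b_m = true,
   indices i_0, ..., i_m given by s. Returns xtilde_{m+1} = xtilde_{N+1}. *)
Definition final_iterate (L : R) (G : 'I_n -> 'rV[R]_d -> 'rV[R]_d)
    (x0 : 'rV[R]_d) (m : nat) (s : {ffun 'I_m.+1 -> 'I_n}) : 'rV[R]_d :=
  (foldl (accsvrg_step L G) (x0, x0)
     [seq (s j, val j == m) | j <- enum 'I_m.+1]).2.

(* Expectation of h(N, xtilde_{N+1}) for a nonnegative h, over the random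
   run: i_k i.i.d. uniform on 'I_n, coins i.i.d. Bernoulli(p_n) independent
   of the indices, N = first k whose coin is true. Computed as the sum over
   all outcomes {N = m, (i_0..i_m) = s}, each of probability
   p (1-p)^m * (1/n)^(m+1); valued in the extended reals. *)
Definition expect_at_stop (L : R) (G : 'I_n -> 'rV[R]_d -> 'rV[R]_d)
    (x0 : 'rV[R]_d) (h : nat -> 'rV[R]_d -> R) : \bar R :=
  (\sum_(0 <= m <oo)
     ((p_n * (1 - p_n) ^+ m * (n%:R ^+ m.+1)^-1 *
       \sum_(s : {ffun 'I_m.+1 -> 'I_n}) h m (final_iterate L G x0 s))%:E))%E.

End AccSVRG.

Definition convex_fun {R : realType} {d : nat} (f : 'rV[R]_d -> R) : Prop :=
  forall (x y : 'rV[R]_d) (t : R), 0 <= t <= 1 ->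
    f (t *: x + (1 - t) *: y) <= t * f x + (1 - t) * f y.

(* oracle cost of a run terminating at N = m: one full gradient at x_0
   (n component gradients, reused since xtilde_k = x_0 for k <= N) and two
   component gradients per iteration k = 0..m. *)
Definition oracle_cost (n m : nat) : nat := n + 2 * m.+1.

From HB Require Import structures.
From mathcomp Require Import all_boot all_order all_algebra.
From mathcomp Require Import all_classical all_reals all_analysis.
From mathcomp Require Import ring lra.
Import Order.TTheory GRing.Theory Num.Theory.
Import numFieldNormedType.Exports.
Local Open Scope ring_scope.

(* Until a coin comes up the snapshot stays at [x0], so the run is a Markov
   chain in [z] alone and the output is [y_N] with [N] geometric of parameter
   [p = 1/n].  The potential [V z = alpha/2 |z - xs|^2] satisfies
     [f (y z) - f xs <= tau (V z - E V z') + (1 - tau) L R0^2 / 4],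
   which combines convexity at [xs], co-coercivity of the L-smooth convex
   [f_i] at [x0] and unbiasedness of the variance-reduced gradient.  Summing
   against [P(N = m) = p (1-p)^m] bounds [E f(y_N) - f xs] by
   [tau (p V x0 + (1 - tau) L R0^2 / (4 tau)) = L R0^2 (3s-1) / (4s(s+1))],
   where [s = sqrt(n+1)]; the gradient bound follows from
   [|grad f y|^2 <= 2L (f y - f xs)] and the expected cost is
   [n + 2 E(N+1) = 3n]. *)

Section InnerProduct.
Context {R : realType} {d : nat}.
Implicit Types (u v w : 'rV[R]_d).

Lemma dotvC u v : dotv u v = dotv v u.
Proof. by apply: eq_bigr => j _; rewrite mulrC. Qed.

Lemma dotvDl u v w : dotv (u + v) w = dotv u w + dotv v w.
Proof. by rewrite /dotv -big_split; apply: eq_bigr => j _; rewrite mxE mulrDl. Qed.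

Lemma dotvZl (a : R) u w : dotv (a *: u) w = a * dotv u w.
Proof. by rewrite /dotv mulr_sumr; apply: eq_bigr => j _; rewrite mxE mulrA. Qed.

Lemma dotvNl u w : dotv (- u) w = - dotv u w.
Proof. by rewrite -scaleN1r dotvZl mulN1r. Qed.

Lemma dotvBl u v w : dotv (u - v) w = dotv u w - dotv v w.
Proof. by rewrite dotvDl dotvNl. Qed.

Lemma dotvDr u v w : dotv w (u + v) = dotv w u + dotv w v.
Proof. by rewrite dotvC dotvDl !(dotvC w). Qed.

Lemma dotvZr (a : R) u w : dotv w (a *: u) = a * dotv w u.
Proof. by rewrite dotvC dotvZl dotvC. Qed.

Lemma dotvNr u w : dotv w (- u) = - dotv w u.
Proof. by rewrite dotvC dotvNl dotvC. Qed.

Lemma dotvBr u v w : dotv w (u - v) = dotv w u - dotv w v.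
Proof. by rewrite dotvDr dotvNr. Qed.

Lemma dotv_suml (I : finType) (u : I -> 'rV[R]_d) w :
  dotv (\sum_i u i) w = \sum_i dotv (u i) w.
Proof.
rewrite /dotv exchange_big /=; apply: eq_bigr => j _.
by rewrite summxE mulr_suml.
Qed.

Lemma dotvvN u : dotv (- u) (- u) = dotv u u.
Proof. by rewrite dotvNl dotvNr opprK. Qed.

Lemma dotv_ge0 u : 0 <= dotv u u.
Proof. by apply: sumr_ge0 => j _; rewrite -expr2 sqr_ge0. Qed.

Lemma dotv_eq0 u : (dotv u u == 0) = (u == 0).
Proof.
apply/idP/eqP => [|->]; last by rewrite /dotv big1 // => j _; rewrite mxE mul0r.
rewrite psumr_eq0 => [/allP u0|j _]; last by rewrite -expr2 sqr_ge0.
apply/rowP => j; rewrite mxE.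
by have := u0 j (mem_index_enum j); rewrite /= -expr2 sqrf_eq0 => /eqP.
Qed.

Lemma enorm_ge0 u : 0 <= enorm u.
Proof. exact: sqrtr_ge0. Qed.

Lemma enorm_sqr u : enorm u ^+ 2 = dotv u u.
Proof. by rewrite sqr_sqrtr // dotv_ge0. Qed.

Lemma enormZ (a : R) u : enorm (a *: u) = `|a| * enorm u.
Proof. by rewrite /enorm dotvZl dotvZr mulrA sqrtrM ?sqrtr_sqr // -expr2 sqr_ge0. Qed.

Lemma dotv_sqrB u (c : R) v :
  dotv (u - c *: v) (u - c *: v) = dotv u u - 2 * c * dotv u v + c ^+ 2 * dotv v v.
Proof. by rewrite !dotvBl !dotvBr !dotvZl !dotvZr (dotvC v u); ring. Qed.

(* Expand [0 <= |a - c v|^2]; this replaces Cauchy-Schwarz. *)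
Lemma dotv_le_of_enorm_le a v (c : R) : 0 < c -> enorm a <= c * enorm v ->
  dotv a v <= c * dotv v v.
Proof.
move=> c0 le_ac.
have aa : dotv a a <= c ^+ 2 * dotv v v.
  rewrite -!enorm_sqr -exprMn.
  by apply: lerXn2r; rewrite ?nnegrE ?mulr_ge0 ?enorm_ge0 ?(ltW c0).
have := dotv_ge0 (a - c *: v); rewrite dotv_sqrB => ge0.
by rewrite -(ler_pM2l (_ : 0 < 2 * c)) ?mulr_gt0 //; nra.
Qed.

Lemma dotv_le_AMGM u v {c : R} : 0 < c ->
  dotv u v <= dotv u u / c + c / 4 * dotv v v.
Proof.
move=> c0; have := dotv_ge0 (u - (c / 2) *: v); rewrite dotv_sqrB => ge0.
rewrite -(ler_pM2l c0) mulrDr mulrCA divff ?gt_eqF // mulr1.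
have -> : c * (c / 4 * dotv v v) = (c / 2) ^+ 2 * dotv v v by field.
by rewrite (_ : 2 * (c / 2) = c) in ge0; [lra | field].
Qed.

End InnerProduct.

Section Calculus.
Context {R : realType} {d : nat}.
Implicit Types (f : 'rV[R]_d -> R) (x u v : 'rV[R]_d).

Lemma convex_fun_ge_tangent f x u : convex_fun f -> differentiable f x ->
  f x + 'd f x (u - x) <= f u.
Proof.
move=> cf dfx; rewrite -deriveE // addrC -lerBrDr.
have qcvg := @diff_derivable _ _ _ _ _ (u - x) dfx.
rewrite /derive (cvg_at_rightE _ _ qcvg).
apply: limr_le; first by apply/cvg_ex; eexists; exact: cvg_dnbhs_at_right qcvg.
near=> h.
have h0 : 0 < h by near: h; exact: nbhs_right_gt.
have h1 : h < 1 by near: h; exact: nbhs_right_lt.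
have := cf u x h; rewrite (ltW h0) (ltW h1) => /(_ isT).
have -> : h *: u + (1 - h) *: x = h *: (u - x) + x.
  by apply/rowP => j; rewrite !mxE; ring.
by rewrite /= ler_pdivrMl //; lra.
Unshelve. all: by end_near.
Qed.

Lemma is_derive_along {V W : normedModType R} (f : V -> W) (x v : V) (t : R) :
  differentiable f (t *: v + x) ->
  is_derive t 1 (fun s => f (s *: v + x)) ('d f (t *: v + x) v).
Proof.
move=> df.
have quotE : (fun h : R => h^-1 *: (((fun s => f (s *: v + x)) \o shift t) (h *: 1)
      - f (t *: v + x))) =
    (fun h => h^-1 *: ((f \o shift (t *: v + x)) (h *: v) - f (t *: v + x))).
  apply/funext => h /=; congr (_ *: (f _ - _)).
  by rewrite /shift /= [h *: 1]mulr1 scalerDl addrA.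
apply: DeriveDef; first by rewrite /derivable quotE; exact: diff_derivable.
by rewrite /derive quotE -deriveE.
Qed.

Lemma increment_le_of_derive_le (phi D : R -> R) (c1 c2 : R) :
  (forall t : R, is_derive t (1 : R) phi (D t)) ->
  (forall t, 0 < t < 1 -> D t <= c1 + 2 * t * c2) ->
  phi 1 <= phi 0 + c1 + c2.
Proof.
move=> dphi Dle.
pose psi := phi - (c1 *: (@idfun R) + c2 *: ((@idfun R) * (@idfun R))).
have dpsi (t : R) : is_derive t (1 : R) psi (D t - (c1 + 2 * t * c2)).
  apply: is_derive_eq; rewrite /GRing.scale /=; ring.
have : psi 1 <= psi 0.
  apply: (@ler0_derive1_le_cc _ psi 0 1) => //; rewrite ?in_itv /= ?ler01 ?lexx //.
  - move=> t; rewrite in_itv /= derive1E (@derive_val _ _ _ _ _ _ _ (dpsi t)) subr_le0; exact: Dle.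
  - by apply: derivable_within_continuous => t _; case: (dpsi t).
change (phi 1 - (c1 * 1 + c2 * (1 * 1)) <= phi 0 - (c1 * 0 + c2 * (0 * 0)) -> phi 1 <= phi 0 + c1 + c2).
lra.
Qed.

End Calculus.

Section SmoothConvex.
Context {R : realType} {d : nat}.
Context {f : 'rV[R]_d -> R} {g : 'rV[R]_d -> 'rV[R]_d} {L : R}.
Hypotheses (L_gt0 : 0 < L) (df : forall x, differentiable f x)
  (dfE : forall x v, 'd f x v = dotv (g x) v).

Lemma convex_fun_ge_linear x u : convex_fun f -> f x + dotv (g x) (u - x) <= f u.
Proof. by move=> cf; rewrite -dfE; exact: convex_fun_ge_tangent. Qed.

Lemma smooth_le_quadratic x u :
  (forall a b, enorm (g a - g b) <= L * enorm (a - b)) ->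
  f u <= f x + dotv (g x) (u - x) + L / 2 * dotv (u - x) (u - x).
Proof.
move=> gL; set v := u - x.
have := @increment_le_of_derive_le _ (fun s => f (s *: v + x))
  (fun t => 'd f (t *: v + x) v) (dotv (g x) v) (L / 2 * dotv v v)
  (fun t => is_derive_along f x v t (df _)).
rewrite scale1r scale0r add0r subrK; apply=> t /andP [t0 t1].
rewrite dfE -lerBlDl -dotvBl.
have -> : 2 * t * (L / 2 * dotv v v) = L * t * dotv v v by field.
apply: dotv_le_of_enorm_le; first by rewrite mulr_gt0.
by have := gL (t *: v + x) x; rewrite addrK enormZ gtr0_norm // mulrA.
Qed.

End SmoothConvex.

Section GradientInequalities.
Context {R : realType} {d : nat}.
Context {f : 'rV[R]_d -> R} {g : 'rV[R]_d -> 'rV[R]_d} {L : R}.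
Hypotheses (L_gt0 : 0 < L)
  (lower : forall x u, f x + dotv (g x) (u - x) <= f u)
  (upper : forall x u, f u <= f x + dotv (g x) (u - x) + L / 2 * dotv (u - x) (u - x)).

Let L_neq0 : L != 0. Proof. by rewrite gt_eqF. Qed.

Lemma gradient_step_le x : f (x - L^-1 *: g x) <= f x - dotv (g x) (g x) / (2 * L).
Proof.
have := upper x (x - L^-1 *: g x).
rewrite [_ - x]addrAC subrr add0r dotvNr dotvvN !dotvZr !dotvZl.
have -> : L / 2 * (L^-1 * (L^-1 * dotv (g x) (g x))) =
  L^-1 * dotv (g x) (g x) - dotv (g x) (g x) / (2 * L) by field.
lra.
Qed.

(* Apply [lower] at the point [u - (g u - g x) / L] and [upper] from [u]. *)
Lemma cocoercive x u :
  f x + dotv (g x) (u - x) + dotv (g u - g x) (g u - g x) / (2 * L) <= f u.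
Proof.
set e := g u - g x; set w := u - L^-1 *: e.
have lo := lower x w; have up := upper u w.
rewrite /w [_ - x]addrAC dotvBr dotvZr in lo.
rewrite /w [_ - u]addrAC subrr add0r dotvvN dotvNr !dotvZr !dotvZl in up.
have ee : dotv e e = dotv (g u) e - dotv (g x) e by rewrite {1}/e dotvBl.
have : dotv e e / (2 * L) = L^-1 * dotv (g u) e - L^-1 * dotv (g x) e
    - L / 2 * (L^-1 * (L^-1 * dotv e e)) by rewrite ee; field.
lra.
Qed.

Context {xs : 'rV[R]_d}.
Hypothesis xs_min : forall x, f xs <= f x.

Lemma gradient_sqr_le_gap y : dotv (g y) (g y) <= 2 * L * (f y - f xs).
Proof.
have := gradient_step_le y; have := xs_min (y - L^-1 *: g y) => le1 le2.
rewrite mulrC -ler_pdivrMr ?mulr_gt0 //; lra.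
Qed.

Lemma gradient_eq0_at_min : g xs = 0.
Proof.
apply/eqP; rewrite -dotv_eq0 eq_le dotv_ge0 andbT.
by have := gradient_sqr_le_gap xs; rewrite subrr mulr0.
Qed.

Lemma gap_sub_gradient_le x :
  f x - f xs - dotv (g x) (g x) / (2 * L) <= L / 4 * dotv (x - xs) (x - xs).
Proof.
have := cocoercive x xs; rewrite gradient_eq0_at_min sub0r dotvvN.
rewrite -[xs - x]opprB dotvNr => coco.
have := dotv_le_AMGM (g x) (x - xs) L_gt0.
have -> : dotv (g x) (g x) / L = 2 * (dotv (g x) (g x) / (2 * L)) by field.
lra.
Qed.

End GradientInequalities.

Section Mean.
Context {R : realType} {n : nat}.
Implicit Types a b : 'I_n -> R.

Definition mean a : R := n%:R^-1 * \sum_i a i.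

Lemma mean_le a b : (forall i, a i <= b i) -> mean a <= mean b.
Proof. by move=> ab; rewrite ler_wpM2l ?invr_ge0 ?ler0n // ler_sum. Qed.

Lemma mean_ge0 a : (forall i, 0 <= a i) -> 0 <= mean a.
Proof. by move=> a0; rewrite mulr_ge0 ?invr_ge0 ?ler0n // sumr_ge0. Qed.

Lemma meanD a b : mean (fun i => a i + b i) = mean a + mean b.
Proof. by rewrite /mean big_split mulrDr. Qed.

Lemma meanN a : mean (fun i => - a i) = - mean a.
Proof. by rewrite /mean sumrN mulrN. Qed.

Lemma meanZ (k : R) a : mean (fun i => k * a i) = k * mean a.
Proof. by rewrite /mean -mulr_sumr mulrCA. Qed.

Lemma mean_sum (I : Type) (r : seq I) (a : I -> 'I_n -> R) :
  \sum_(j <- r) mean (a j) = mean (fun i => \sum_(j <- r) a j i).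
Proof. by rewrite /mean -mulr_sumr exchange_big. Qed.

Lemma mean_dotv {d : nat} (u : 'I_n -> 'rV[R]_d) (w : 'rV[R]_d) :
  mean (fun i => dotv (u i) w) = dotv (n%:R^-1 *: \sum_i u i) w.
Proof. by rewrite dotvZl dotv_suml. Qed.

Hypothesis n_gt0 : (0 < n)%N.

Lemma mean_cst (c : R) : mean (fun=> c) = c.
Proof.
by rewrite /mean sumr_const card_ord -[c *+ n]mulr_natl mulrA mulVf ?mul1r // pnatr_eq0 -lt0n.
Qed.

End Mean.

Section IteratedMean.
Context {R : realType} {n : nat} {T : Type}.
Variable step : T -> 'I_n -> T.
Hypothesis n_gt0 : (0 < n)%N.

Fixpoint iter_mean (m : nat) (h : T -> R) (z : T) : R :=
  if m is m'.+1 then mean (fun i => iter_mean m' h (step z i)) else h z.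

Lemma iter_mean_ge0 m h z : (forall z, 0 <= h z) -> 0 <= iter_mean m h z.
Proof. by move=> h0; elim: m z => [|m IHm] z //=; apply: mean_ge0. Qed.

Lemma iter_mean_cst m (c : R) z : iter_mean m (fun=> c) z = c.
Proof. by elim: m z => [|m IHm] z //=; under eq_fun do rewrite IHm; exact: mean_cst. Qed.

(* The left-hand side is the expectation of [h] at the chain stopped at an
   independent geometric time of parameter [p], truncated at [M]. *)
Lemma geometric_stop_lyapunov (h V : T -> R) (k p C : R) :
  0 <= k -> 0 <= p <= 1 -> 0 <= C -> (forall z, 0 <= V z) ->
  (forall z, h z <= k * (V z - mean (fun i => V (step z i)) + C)) ->
  forall M z, \sum_(0 <= m < M) p * (1 - p) ^+ m * iter_mean m h z <= k * (p * V z + C).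
Proof.
move=> k0 /andP [p0 p1] C0 V0 hV; elim=> [|M IHM] z.
  by rewrite big_nil mulr_ge0 // addr_ge0 // mulr_ge0.
rewrite big_nat_recl //= expr0 mulr1.
under eq_bigr do rewrite exprS (mulrCA p) -mulrA -meanZ.
rewrite -mulr_sumr mean_sum.
set A := mean (fun i => V (step z i)).
have A0 : 0 <= A by apply: mean_ge0.
have tail : mean (fun i => \sum_(0 <= m < M) p * (1 - p) ^+ m * iter_mean m h (step z i))
    <= k * (p * A + C).
  apply: le_trans (mean_le _ _ (fun i => IHM (step z i))) _.
  by rewrite meanZ meanD meanZ mean_cst.
have head : p * h z <= p * (k * (V z - A + C)) by rewrite ler_wpM2l.
have q0 : 0 <= 1 - p by rewrite subr_ge0.
have := ler_wpM2l q0 tail.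
have : 0 <= k * (p ^+ 2 * A) by rewrite mulr_ge0 // mulr_ge0 // sqr_ge0.
have -> : k * (p * V z + C) = p * (k * (V z - A + C)) + (1 - p) * (k * (p * A + C))
  + k * (p ^+ 2 * A) by ring.
lra.
Qed.

End IteratedMean.

Lemma sum_ffunS {R : nmodType} {T : finType} m (H : {ffun 'I_m.+1 -> T} -> R) :
  \sum_(s : {ffun 'I_m.+1 -> T}) H s =
  \sum_(i : T) \sum_(t : {ffun 'I_m -> T})
     H [ffun j => if unlift ord0 j is Some j' then t j' else i].
Proof.
rewrite pair_big /=.
pose cons_ffun (it : T * {ffun 'I_m -> T}) :=
  [ffun j => if unlift ord0 j is Some j' then it.2 j' else it.1].
rewrite (reindex cons_ffun) //=.
exists (fun s : {ffun 'I_m.+1 -> T} => (s ord0, [ffun j => s (lift ord0 j)])).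
  move=> [i t] _; rewrite /cons_ffun /= ffunE unlift_none; congr (_, _).
  by apply/ffunP => j; rewrite !ffunE liftK.
move=> s _; apply/ffunP => j; rewrite /cons_ffun ffunE /=.
by case: unliftP => [j' ->|->]; rewrite ?ffunE.
Qed.

Lemma nneseries_le_partial {R : realType} (u : nat -> R) (B : R) :
  (forall m, 0 <= u m) -> (forall M, \sum_(0 <= m < M) u m <= B) ->
  (\sum_(0 <= m <oo) (u m)%:E <= B%:E)%E.
Proof.
move=> u0 uB; apply: lime_le; first by apply: is_cvg_nneseries => m _ _; rewrite lee_fin.
by apply: nearW => M; rewrite sumEFin lee_fin.
Qed.

Section Trajectory.
Context {R : realType} {d n : nat}.
Variables (L : R) (G : 'I_n -> 'rV[R]_d -> 'rV[R]_d) (x0 : 'rV[R]_d).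

(* Before the stopping time the snapshot is still [x0], so the state reduces
   to [z_k] and [y_k], [z_(k+1)] are the following functions of it. *)
Definition y_of (z : 'rV[R]_d) : 'rV[R]_d :=
  @tau_n R n *: z + (1 - @tau_n R n) *: (x0 - L^-1 *: fullgrad G x0).

Definition z_next (z : 'rV[R]_d) (i : 'I_n) : 'rV[R]_d :=
  z - (@alpha_n R n L)^-1 *: (G i (y_of z) - G i x0 + fullgrad G x0).

Definition final_from (z : 'rV[R]_d) {m : nat} (s : {ffun 'I_m.+1 -> 'I_n}) : 'rV[R]_d :=
  (foldl (accsvrg_step L G) (z, x0) [seq (s j, val j == m) | j <- enum 'I_m.+1]).2.

Lemma final_from0 z (s : {ffun 'I_1 -> 'I_n}) : final_from z s = y_of z.
Proof. by rewrite /final_from enum_ordSl /= enum_ord0. Qed.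

Lemma final_fromS z m (s : {ffun 'I_m.+2 -> 'I_n}) :
  final_from z s = final_from (z_next z (s ord0)) [ffun j => s (lift ord0 j)].
Proof.
rewrite /final_from enum_ordSl /= -map_comp.
by congr (foldl _ _ _).2; apply: eq_map => j /=; rewrite ffunE.
Qed.

Hypothesis n_gt0 : (0 < n)%N.
Let n_neq0 : n%:R != 0 :> R. Proof. by rewrite pnatr_eq0 -lt0n. Qed.

Lemma sum_final_from m (h : 'rV[R]_d -> R) z :
  \sum_(s : {ffun 'I_m.+1 -> 'I_n}) h (final_from z s) =
  n%:R ^+ m.+1 * iter_mean z_next m (h \o y_of) z.
Proof.
elim: m z => [|m IHm] z.
  under eq_bigr do rewrite final_from0.
  by rewrite sumr_const card_ffun !card_ord expn1 expr1 mulr_natl.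
rewrite sum_ffunS.
under eq_bigr => i _.
  under eq_bigr => t _.
    rewrite final_fromS ffunE unlift_none.
    have -> : [ffun j => [ffun j0 => if unlift ord0 j0 is Some j' then t j' else i]
        (lift ord0 j)] = t by apply/ffunP => j; rewrite !ffunE liftK.
    over.
  rewrite IHm; over.
have nV : n%:R ^+ m.+2 * n%:R^-1 = n%:R ^+ m.+1 :> R.
  by rewrite exprS mulrAC mulfV ?mul1r.
by rewrite /= -mulr_sumr /mean mulrA nV.
Qed.

Lemma expect_at_stopE (h : nat -> 'rV[R]_d -> R) :
  expect_at_stop L G x0 h = (\sum_(0 <= m <oo)
     (@p_n R n * (1 - @p_n R n) ^+ m * iter_mean z_next m (h m \o y_of) x0)%:E)%E.
Proof.
apply: eq_eseriesr => m _; congr (_%:E).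
rewrite (sum_final_from m (h m)) mulrA; congr (_ * _).
by rewrite mulfVK // expf_neq0.
Qed.

End Trajectory.

Section StepSizes.
Context {R : realType} {n : nat}.
Hypothesis n_gt0 : (0 < n)%N.
Local Notation s := (Num.sqrt (n.+1)%:R : R).

Lemma sqrt_natS_gt1 : 1 < s.
Proof. by rewrite -[X in X < _]sqrtr1 ltr_sqrt ?ltr0n // ltr1n ltnS. Qed.

Lemma tau_n_gt0 : 0 < @tau_n R n.
Proof. by rewrite /tau_n subr_gt0 invf_lt1 ?sqrt_natS_gt1 // (lt_trans ltr01 sqrt_natS_gt1). Qed.

Lemma one_sub_tau_n : 1 - @tau_n R n = s^-1.
Proof. by rewrite /tau_n opprB addrC subrK. Qed.

Lemma alpha_nE (L : R) : @alpha_n R n L = L * (s - 1).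
Proof.
rewrite /alpha_n one_sub_tau_n /tau_n.
by field; rewrite gt_eqF // (lt_trans ltr01 sqrt_natS_gt1).
Qed.

Lemma alpha_n_gt0 (L : R) : 0 < L -> 0 < @alpha_n R n L.
Proof. by move=> L0; rewrite alpha_nE mulr_gt0 // subr_gt0 sqrt_natS_gt1. Qed.

Lemma p_nE : @p_n R n = (s ^+ 2 - 1)^-1.
Proof. by rewrite /p_n sqr_sqrtr ?ler0n // -natr1 addrK. Qed.

Lemma p_n_ge0 : 0 <= @p_n R n.
Proof. by rewrite /p_n invr_ge0 ler0n. Qed.

Lemma one_sub_p_n_ge0 : 0 <= 1 - @p_n R n.
Proof. by rewrite subr_ge0 /p_n invf_le1 ?ltr0n // ler1n. Qed.

End StepSizes.

Section AccSVRG.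
Context {R : realType} {d n : nat}.
Variables (L R0 : R) (F : 'I_n -> 'rV[R]_d -> R) (G : 'I_n -> 'rV[R]_d -> 'rV[R]_d)
  (x0 xs : 'rV[R]_d).
Hypotheses (n_gt0 : (0 < n)%N) (L_gt0 : 0 < L)
  (dF : forall i x, differentiable (F i) x)
  (dFE : forall i x v, 'd (F i) x v = dotv (G i x) v)
  (cF : forall i, convex_fun (F i))
  (lipG : forall i x y, enorm (G i x - G i y) <= L * enorm (x - y))
  (xs_min : forall x, favg F xs <= favg F x)
  (x0_xs : enorm (x0 - xs) <= R0).

Local Notation f := (favg F).
Local Notation gf := (fullgrad G).
Local Notation s := (Num.sqrt (n.+1)%:R : R).
Local Notation tau := (@tau_n R n).
Local Notation al := (@alpha_n R n L).
Local Notation p := (@p_n R n).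

Let s_gt1 : 1 < s. Proof. exact: sqrt_natS_gt1. Qed.
Let s_gt0 : 0 < s. Proof. exact: lt_trans ltr01 s_gt1. Qed.
Let tau_gt0 : 0 < tau. Proof. exact: tau_n_gt0. Qed.
Let alpha_gt0 : 0 < al. Proof. exact: alpha_n_gt0. Qed.
Let one_sub_p_ge0 : 0 <= 1 - p. Proof. exact: one_sub_p_n_ge0. Qed.
Let n_neq0 : n%:R != 0 :> R. Proof. by rewrite pnatr_eq0 -lt0n. Qed.

Lemma F_lower i x u : F i x + dotv (G i x) (u - x) <= F i u.
Proof. exact: convex_fun_ge_linear. Qed.

Lemma F_upper i x u :
  F i u <= F i x + dotv (G i x) (u - x) + L / 2 * dotv (u - x) (u - x).
Proof. exact: smooth_le_quadratic. Qed.

Lemma favg_lower x u : f x + dotv (gf x) (u - x) <= f u.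
Proof. by rewrite -mean_dotv -meanD; apply: mean_le => i; exact: F_lower. Qed.

Lemma favg_upper x u :
  f u <= f x + dotv (gf x) (u - x) + L / 2 * dotv (u - x) (u - x).
Proof.
rewrite -mean_dotv -meanD -[_ / 2 * _](mean_cst n_gt0) -meanD.
by apply: mean_le => i; exact: F_upper.
Qed.

Lemma favg_cocoercive y : f y + dotv (gf y) (x0 - y)
  + mean (fun i => dotv (G i x0 - G i y) (G i x0 - G i y)) / (2 * L) <= f x0.
Proof.
rewrite -mean_dotv -meanD mulrC -meanZ -meanD; apply: mean_le => i.
by rewrite mulrC; apply: cocoercive => //; [exact: F_lower | exact: F_upper].
Qed.

Definition lyap (z : 'rV[R]_d) : R := al / 2 * dotv (z - xs) (z - xs).

Lemma lyap_ge0 z : 0 <= lyap z.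
Proof. by rewrite mulr_ge0 ?dotv_ge0 // divr_ge0 // ltW // alpha_gt0. Qed.

Lemma mean_lyap_z_next z (y := y_of L G x0 z) :
  mean (fun i => lyap (z_next L G x0 z i)) = lyap z - dotv (gf y) (z - xs)
  + (2 * al)^-1 * (mean (fun i => dotv (G i x0 - G i y) (G i x0 - G i y))
                   + 2 * dotv (gf y - gf x0) (gf x0) + dotv (gf x0) (gf x0)).
Proof.
have al_neq0 : al != 0 by rewrite gt_eqF // alpha_gt0.
have lyap_step i : lyap (z_next L G x0 z i) = lyap z
    - dotv (G i y - G i x0 + gf x0) (z - xs)
    + (2 * al)^-1 * (dotv (G i x0 - G i y) (G i x0 - G i y)
                     + 2 * dotv (G i y - G i x0) (gf x0) + dotv (gf x0) (gf x0)).
  rewrite /lyap /z_next -/y [_ - xs]addrAC dotv_sqrB.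
  rewrite -[G i x0 - G i y]opprB dotvvN (dotvC (z - xs)).
  move: (G i y - G i x0) (gf x0) (z - xs) => e c w.
  by rewrite !dotvDl !dotvDr (dotvC c e) (dotvC e w) (dotvC c w); field.
under eq_fun do rewrite lyap_step.
have mean_diff : n%:R^-1 *: \sum_i (G i y - G i x0) = gf y - gf x0.
  by rewrite sumrB scalerBr.
have unbiased : n%:R^-1 *: \sum_i (G i y - G i x0 + gf x0) = gf y.
  rewrite big_split /= scalerDr mean_diff sumr_const card_ord -[gf x0 *+ n]scaler_nat.
  by rewrite scalerA mulVf // scale1r subrK.
by rewrite !(meanD, meanN, meanZ) !mean_cst // !mean_dotv mean_diff unbiased.
Qed.

(* [1 - tau] times [favg_cocoercive y] plus [tau] times convexity at [xs];
   since [alpha = L tau / (1 - tau)], the inner products match exactly. *)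
Lemma lyap_decrease z (y := y_of L G x0 z) :
  f y - f xs <= tau * (lyap z - mean (fun i => lyap (z_next L G x0 z i)))
    + (1 - tau) * (f x0 - f xs - dotv (gf x0) (gf x0) / (2 * L)).
Proof.
rewrite mean_lyap_z_next -/y.
have tau0 := tau_gt0; have th0 : 0 < 1 - tau by rewrite one_sub_tau_n invr_gt0.
have L_neq0 : L != 0 by rewrite gt_eqF.
set g0 := gf x0; set gy := gf y.
set S := mean (fun i => dotv (G i x0 - G i y) (G i x0 - G i y)).
have yE : (1 - tau) *: (x0 - y) + tau *: (xs - y)
    = tau *: (xs - z) + ((1 - tau) / L) *: g0.
  by rewrite /y /y_of; apply/rowP => j; rewrite !mxE; ring.
have dot_yE : (1 - tau) * dotv gy (x0 - y) + tau * dotv gy (xs - y)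
    = - (tau * dotv gy (z - xs)) + (1 - tau) / L * dotv gy g0.
  rewrite -!dotvZr -dotvDr yE dotvDr (dotvZr tau) -[xs - z]opprB dotvNr mulrN.
  by rewrite (dotvZr tau).
have tau_alpha : tau * (2 * al)^-1 = (1 - tau) / (2 * L).
  by rewrite /alpha_n; field; rewrite !gt_eqF.
set X := S + _ + _.
have -> : tau * (lyap z - (lyap z - dotv gy (z - xs) + (2 * al)^-1 * X))
    = tau * dotv gy (z - xs) - (tau * (2 * al)^-1) * X by ring.
rewrite tau_alpha /X dotvBl.
have := ler_wpM2l (ltW th0) (favg_cocoercive y).
have := ler_wpM2l (ltW tau0) (favg_lower y xs).
rewrite -/y -/gy -/g0 -/S; lra.
Qed.

Lemma dist_x0_sqr : dotv (x0 - xs) (x0 - xs) <= R0 ^+ 2.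
Proof.
rewrite -enorm_sqr lerXn2r ?nnegrE ?enorm_ge0 //.
exact: le_trans (enorm_ge0 _) x0_xs.
Qed.

Lemma gap_at_x0 : f x0 - f xs - dotv (gf x0) (gf x0) / (2 * L) <= L / 4 * R0 ^+ 2.
Proof.
apply: le_trans (gap_sub_gradient_le L_gt0 favg_lower favg_upper xs_min x0) _.
by rewrite ler_wpM2l ?divr_ge0 ?(ltW L_gt0) // dist_x0_sqr.
Qed.

Let C := (1 - tau) / tau * (L / 4 * R0 ^+ 2).

Let C_ge0 : 0 <= C.
Proof.
have R0_ge0 : 0 <= R0 := le_trans (enorm_ge0 _) x0_xs.
by rewrite /C one_sub_tau_n !(mulr_ge0, divr_ge0, invr_ge0) // ltW // tau_gt0.
Qed.

Lemma stop_partial_sum_le (h : 'rV[R]_d -> R) (k : R) M : 0 <= k ->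
  (forall y, h y <= k * (f y - f xs)) ->
  \sum_(0 <= m < M) p * (1 - p) ^+ m * iter_mean (z_next L G x0) m (h \o y_of L G x0) x0
    <= k * tau * (p * (al / 2 * R0 ^+ 2) + C).
Proof.
move=> k0 hk; have tau0 := tau_gt0.
apply: le_trans (geometric_stop_lyapunov (z_next L G x0) n_gt0 (h \o y_of L G x0) lyap (k * tau) p C
  _ _ C_ge0 lyap_ge0 _ M x0) _.
- by rewrite mulr_ge0 // ltW.
- by rewrite p_n_ge0 -subr_ge0.
- move=> z; apply: (le_trans (hk _)); rewrite -mulrA ler_wpM2l //.
  apply: (le_trans (lyap_decrease z)).
  have tauC : tau * C = (1 - tau) * (L / 4 * R0 ^+ 2).
    by rewrite /C; field; rewrite gt_eqF.
  rewrite [X in _ <= X]mulrDr tauC lerD2l ler_wpM2l ?gap_at_x0 //.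
  by rewrite one_sub_tau_n invr_ge0 ltW.
rewrite ler_wpM2l ?mulr_ge0 ?(ltW tau0) // lerD2r ler_wpM2l ?p_n_ge0 //.
apply: ler_wpM2l dist_x0_sqr.
by rewrite divr_ge0 // ltW // alpha_gt0.
Qed.

Lemma stop_boundE :
  tau * (p * (al / 2 * R0 ^+ 2) + C) = L * R0 ^+ 2 * (3 * s - 1) / (4 * s * (s + 1)).
Proof.
rewrite p_nE alpha_nE /C one_sub_tau_n /tau_n; field.
apply/and4P; split; rewrite gt_eqF // subr_gt0 //.
by rewrite sqr_sqrtr ?ler0n // ltr1n.
Qed.

Lemma expect_at_stop_le (h : 'rV[R]_d -> R) (k : R) : 0 <= k ->
  (forall y, 0 <= h y) -> (forall y, h y <= k * (f y - f xs)) ->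
  (expect_at_stop L G x0 (fun _ => h)
     <= (k * (L * R0 ^+ 2 * (3 * s - 1) / (4 * s * (s + 1))))%:E)%E.
Proof.
move=> k0 h0 hk; rewrite expect_at_stopE //.
apply: nneseries_le_partial => [m|M]; last by rewrite -stop_boundE mulrA; exact: stop_partial_sum_le.
rewrite !mulr_ge0 ?exprn_ge0 ?p_n_ge0 ?one_sub_p_ge0 //.
by apply: iter_mean_ge0 => z; exact: h0.
Qed.

Lemma expect_gap_le : (expect_at_stop L G x0 (fun _ x => (f x - f xs)%R)
  <= (L * R0 ^+ 2 / (s + 1))%:E)%E.
Proof.
apply: le_trans (expect_at_stop_le (fun x => f x - f xs) 1 ler01 _ _) _.
- by move=> y; rewrite subr_ge0.
- by move=> y; rewrite mul1r.
rewrite lee_fin mul1r -subr_ge0.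
have -> : L * R0 ^+ 2 / (s + 1) - L * R0 ^+ 2 * (3 * s - 1) / (4 * s * (s + 1))
    = L * R0 ^+ 2 / (4 * s) by field; rewrite !gt_eqF // addr_gt0.
apply: divr_ge0; first by rewrite mulr_ge0 ?sqr_ge0 // ltW.
by rewrite mulr_ge0 // ltW.
Qed.

Lemma expect_grad_le : (expect_at_stop L G x0 (fun _ x => (enorm (gf x) ^+ 2)%R)
  <= (8 * L ^+ 2 * R0 ^+ 2 / (5 * (s + 1)))%:E)%E.
Proof.
have k0 : 0 <= 2 * L by rewrite mulr_ge0 // ltW.
apply: le_trans (expect_at_stop_le (fun x => enorm (gf x) ^+ 2) (2 * L) k0 _ _) _.
- by move=> y; exact: sqr_ge0.
- move=> y; rewrite enorm_sqr.
  exact: (gradient_sqr_le_gap L_gt0 favg_upper xs_min).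
rewrite lee_fin -subr_ge0.
have -> : 8 * L ^+ 2 * R0 ^+ 2 / (5 * (s + 1))
    - 2 * L * (L * R0 ^+ 2 * (3 * s - 1) / (4 * s * (s + 1)))
    = L ^+ 2 * R0 ^+ 2 * (s + 5) / (10 * s * (s + 1)).
  by field; rewrite !gt_eqF // addr_gt0.
have := s_gt0 => s0; apply: divr_ge0; first by apply: mulr_ge0; [rewrite mulr_ge0 ?sqr_ge0 | lra].
by apply: mulr_ge0; lra.
Qed.

Lemma cost_partial_sum M : \sum_(0 <= m < M) p * (1 - p) ^+ m * (oracle_cost n m)%:R
  = 3 * n%:R - (1 - p) ^+ M * (3 * n%:R + 2 * M%:R).
Proof.
elim: M => [|M IHM]; first by rewrite big_nil expr0 mul1r mulr0 addr0 subrr.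
rewrite big_nat_recr //= IHM /oracle_cost natrD natrM -natr1 exprS /p_n.
by move: ((1 - n%:R^-1) ^+ M) => q; field.
Qed.

Lemma expect_cost_le : (expect_at_stop L G x0 (fun m _ => ((oracle_cost n m)%:R)%R)
  <= (3 * n)%:R%:E)%E.
Proof.
rewrite expect_at_stopE //; under eq_eseriesr do rewrite /= iter_mean_cst //.
apply: nneseries_le_partial => [m|M].
  by rewrite !mulr_ge0 ?exprn_ge0 ?p_n_ge0 ?one_sub_p_ge0.
by rewrite cost_partial_sum natrM gerBl // mulr_ge0 ?exprn_ge0 ?one_sub_p_ge0.
Qed.

End AccSVRG.

Theorem theorem5 (R : realType) (d n : nat) (L R0 : R)
    (F : 'I_n -> 'rV[R]_d -> R) (G : 'I_n -> 'rV[R]_d -> 'rV[R]_d)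
    (x0 xs : 'rV[R]_d) :
  (0 < n)%N -> 0 < L ->
  (forall i x, differentiable (F i) x) ->
  (forall i x v, 'd (F i) x v = dotv (G i x) v) ->
  (forall i, convex_fun (F i)) ->
  (forall i x y, enorm (G i x - G i y) <= L * enorm (x - y)) ->
  (forall x, favg F xs <= favg F x) ->
  enorm (x0 - xs) <= R0 ->
  [/\ (expect_at_stop L G x0
         (fun _ x => (enorm (fullgrad G x) ^+ 2)%R)
       <= (8 * L ^+ 2 * R0 ^+ 2 / (5 * (Num.sqrt (n.+1)%:R + 1)))%:E)%E,
      (expect_at_stop L G x0
         (fun _ x => (favg F x - favg F xs)%R)
       <= (L * R0 ^+ 2 / (Num.sqrt (n.+1)%:R + 1))%:E)%E
    & (expect_at_stop L G x0 (fun m _ => ((oracle_cost n m)%:R)%R)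
       <= (3 * n)%:R%:E)%E].
Proof.
move=> n_gt0 L_gt0 dF dFE cF lipG xs_min x0_xs; split.
- exact: expect_grad_le.
- exact: expect_gap_le.
- exact: expect_cost_le.
Qed.
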